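(* There exists a $(5,1,6)$ strategy.
   Context: The GKS game with parameter $n$ (a positive integer). A strategy pair $(S,T)$ consists of a function $S$ assigning a bit in $\{0,1\}$ to every sequence $\pi_1\pi_2\ldots\pi_i$ of distinct elements of $[n]=\{1,\dots,n\}$ with $1\le i\le n-1$, and a function $T:\{0,1\}^n\to 2^{[n]}$. For a permutation $\pi=\pi_1\ldots\pi_n$ of $[n]$ and a bit $b$, the final array $A_{\rm final}\in\{0,1\}^n$ is defined by $A_{\rm final}[\pi_i]=S(\pi_1\ldots\pi_i)$ for $1\le i\le n-1$ and $A_{\rm final}[\pi_n]=b$. The pair $(S,T)$ is a $(k,n)$ strategy if for every permutation $\pi$ of $[n]$ and every bit $b$ we have $\pi_n\in T(A_{\rm final})$, and moreover $|T(\sigma)|\le k$ for every $\sigma\in\{0,1\}^n$. A $(k,k_A,n)$ strategy is a $(k,n)$ strategy $(S,T)$ in which $S$ is additionally defined on all full permutations $\pi_1\ldots\pi_n$ of $[n]$ (''Alice-mode''), such that, letting $\mathcal{O}_A$ be the set of all arrays $A\in\{0,1\}^n$ with $A[\pi_i]=S(\pi_1\ldots\pi_i)$ for all $1\le i\le n$, for some permutation $\pi$ of $[n]$, we have $|T(\sigma)|\le k_A$ for every $\sigma\in\mathcal{O}_A$. *)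

From mathcomp Require Import all_boot.
Set Implicit Arguments. Unset Strict Implicit. Unset Printing Implicit Defensive.

(* Elements of [n] = {1..n} are represented by 'I_n = {0..n-1}.
   A sequence pi_1 ... pi_i of distinct elements is a seq 'I_n; a permutation
   of [n] is a duplicate-free seq of length n.  The bit-assigning function S is
   given on all sequences (only its values on the relevant sequences matter). *)

Definition is_perm_seq (n : nat) (s : seq 'I_n) : bool := uniq s && (size s == n).

(* The final array for permutation s and bit b:
   A[pi_i] = S(pi_1..pi_i) for i <= n-1 (pi_i = j iff index j s = i-1),
   A[pi_n] = b. *)
Definition final_array (n : nat) (S : seq 'I_n -> bool) (s : seq 'I_n) (b : bool)
  : {ffun 'I_n -> bool} :=
  [ffun j => if index j s == n.-1 then b else S (take (index j s).+1 s)].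

Definition alice_array (n : nat) (S : seq 'I_n -> bool) (s : seq 'I_n)
  : {ffun 'I_n -> bool} :=
  [ffun j => S (take (index j s).+1 s)].

Definition kn_strategy (k n : nat) (S : seq 'I_n -> bool)
    (T : {ffun 'I_n -> bool} -> {set 'I_n}) : Prop :=
  (forall (s : seq 'I_n) (b : bool), is_perm_seq s ->
     forall j : 'I_n, index j s = n.-1 -> j \in T (final_array S s b))
  /\ (forall sigma : {ffun 'I_n -> bool}, #|T sigma| <= k).

Definition in_OA (n : nat) (S : seq 'I_n -> bool) (sigma : {ffun 'I_n -> bool}) : Prop :=
  exists s : seq 'I_n, is_perm_seq s /\ sigma = alice_array S s.

Definition kkn_strategy (k kA n : nat) (S : seq 'I_n -> bool)
    (T : {ffun 'I_n -> bool} -> {set 'I_n}) : Prop :=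
  kn_strategy k S T /\
  (forall sigma : {ffun 'I_n -> bool}, in_OA S sigma -> #|T sigma| <= kA).

From mathcomp Require Import all_boot.
Set Implicit Arguments. Unset Strict Implicit. Unset Printing Implicit Defensive.

(* The strategy is a finite certificate found by computer search: Bob's bit
   S(pi_1..pi_i) is 1 exactly on the prefixes listed in [S6_ones], and the
   guess set T(A) is the row of [T6_table] indexed by A read as a binary
   number.  Both conditions then only need checking on the 720 permutations
   of [6], which the kernel does by evaluation once the statement has been
   transported from ordinals and finite functions to lists of naturals. *)

Definition bits_code (bs : seq bool) : nat := foldr (fun (b : bool) c => b + 2 * c) 0 bs.

Section TableStrategy.

Variables (n : nat) (ones : seq (seq nat)) (table : seq (seq nat)).

Definition table_S (s : seq 'I_n) : bool := map val s \in ones.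

Definition table_T (sigma : {ffun 'I_n -> bool}) : {set 'I_n} :=
  [set j | val j \in nth [::] table (bits_code (map sigma (enum 'I_n)))].

Definition final_bits (t : seq nat) (b : bool) : seq bool :=
  [seq if index k t == n.-1 then b else take (index k t).+1 t \in ones
  | k <- iota 0 n].

Definition alice_bits (t : seq nat) : seq bool :=
  [seq take (index k t).+1 t \in ones | k <- iota 0 n].

Lemma map_ffun_enum_ord (f : nat -> bool) (sigma : {ffun 'I_n -> bool}) :
  (forall j, sigma j = f (val j)) -> map sigma (enum 'I_n) = map f (iota 0 n).
Proof. by move=> sigmaE; rewrite -val_enum_ord -map_comp; apply: eq_map. Qed.

Lemma map_final_array (s : seq 'I_n) (b : bool) :
  map (final_array table_S s b) (enum 'I_n) = final_bits (map val s) b.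
Proof.
apply: map_ffun_enum_ord => j.
by rewrite ffunE /table_S index_map ?map_take //; apply: val_inj.
Qed.

Lemma map_alice_array (s : seq 'I_n) :
  map (alice_array table_S s) (enum 'I_n) = alice_bits (map val s).
Proof.
apply: map_ffun_enum_ord => j.
by rewrite ffunE /table_S index_map ?map_take //; apply: val_inj.
Qed.

Lemma card_table_T (sigma : {ffun 'I_n -> bool}) :
  #|table_T sigma| <= size (nth [::] table (bits_code (map sigma (enum 'I_n)))).
Proof.
rewrite cardE -(size_map val); apply: uniq_leq_size.
  by rewrite (map_inj_uniq val_inj) enum_uniq.
by move=> x /mapP [j]; rewrite mem_enum inE => + ->.
Qed.

Lemma perm_seq_permutations (s : seq 'I_n) :
  is_perm_seq s -> map val s \in permutations (iota 0 n).
Proof.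
case/andP=> uniq_s /eqP size_s.
rewrite mem_permutations -val_enum_ord; apply: perm_map.
have size_enum : size (enum 'I_n) <= size s by rewrite size_enum_ord size_s.
have [_ same_mem] := uniq_min_size uniq_s (fun x _ => mem_enum _ x) size_enum.
by apply: uniq_perm => //; apply: enum_uniq.
Qed.

Lemma val_last_perm_seq (s : seq 'I_n) (j : 'I_n) :
  is_perm_seq s -> index j s = n.-1 -> val j = nth 0 (map val s) n.-1.
Proof.
case/andP=> _ /eqP size_s index_j.
have lt_last : n.-1 < size s by rewrite size_s prednK ?(leq_ltn_trans _ (ltn_ord j)).
have s_j : j \in s by rewrite -index_mem index_j.
by rewrite (nth_map j) // -index_j nth_index.
Qed.

Lemma table_kkn_strategy (k kA : nat) :
  all (fun row => size row <= k) table ->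
  all (fun t => [&& nth 0 t n.-1 \in nth [::] table (bits_code (final_bits t true)),
                    nth 0 t n.-1 \in nth [::] table (bits_code (final_bits t false))
                  & size (nth [::] table (bits_code (alice_bits t))) <= kA])
      (permutations (iota 0 n)) ->
  kkn_strategy k kA table_S table_T.
Proof.
move=> small_rows perm_ok; split; first split.
- move=> s b perm_s j last_j.
  have /(allP perm_ok) /and3P [guess_true guess_false _] := perm_seq_permutations perm_s.
  by rewrite inE map_final_array (val_last_perm_seq perm_s last_j); case: b.
- move=> sigma; apply: leq_trans (card_table_T sigma) _.
  set c := bits_code _; have [lt_c | le_c] := ltnP c (size table).
    by apply: (allP small_rows); apply: mem_nth.
  by rewrite nth_default.
- move=> sigma [s [perm_s ->]].
  have /(allP perm_ok) /and3P [_ _ alice_small] := perm_seq_permutations perm_s.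
  by apply: leq_trans (card_table_T _) _; rewrite map_alice_array.
Qed.

End TableStrategy.

Definition S6_ones : seq (seq nat) := [:: [:: 0]; [:: 0; 1]; [:: 0; 1; 2]; [:: 0; 1; 2; 3]; [:: 0; 1; 2; 3; 4]; [:: 0; 1; 2; 3; 4; 5]; [:: 0; 1; 2; 4]; [:: 0; 1; 2; 4; 3]; [:: 0; 1; 2; 4; 3; 5]; [:: 0; 1; 2; 5; 3]; [:: 0; 1; 2; 5; 4]; [:: 0; 1; 3]; [:: 0; 1; 3; 2]; [:: 0; 1; 3; 2; 4]; [:: 0; 1; 3; 2; 4; 5]; [:: 0; 1; 3; 4]; [:: 0; 1; 3; 4; 2]; [:: 0; 1; 3; 4; 2; 5]; [:: 0; 1; 3; 5; 2]; [:: 0; 1; 3; 5; 4]; [:: 0; 1; 4]; [:: 0; 1; 4; 2]; [:: 0; 1; 4; 2; 3]; [:: 0; 1; 4; 2; 3; 5]; [:: 0; 1; 4; 3]; [:: 0; 1; 4; 3; 2]; [:: 0; 1; 4; 3; 2; 5]; [:: 0; 1; 4; 5; 2]; [:: 0; 1; 4; 5; 3]; [:: 0; 1; 5; 2]; [:: 0; 1; 5; 2; 3]; [:: 0; 1; 5; 2; 4]; [:: 0; 1; 5; 3]; [:: 0; 1; 5; 3; 2]; [:: 0; 1; 5; 3; 4]; [:: 0; 1; 5; 4]; [:: 0; 1; 5; 4; 2]; [:: 0; 1; 5; 4; 3]; [:: 0; 2]; [:: 0; 2; 1]; [:: 0; 2; 1; 3]; [:: 0; 2; 1; 3; 4]; [::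 0; 2; 1; 3; 4; 5]; [:: 0; 2; 1; 4]; [:: 0; 2; 1; 4; 3]; [:: 0; 2; 1; 4; 3; 5]; [:: 0; 2; 1; 5; 3]; [:: 0; 2; 1; 5; 4]; [:: 0; 2; 3]; [:: 0; 2; 3; 1]; [:: 0; 2; 3; 1; 4]; [:: 0; 2; 3; 1; 4; 5]; [:: 0; 2; 3; 4]; [:: 0; 2; 3; 4; 1]; [:: 0; 2; 3; 4; 1; 5]; [:: 0; 2; 3; 5; 1]; [:: 0; 2; 3; 5; 4]; [:: 0; 2; 4]; [:: 0; 2; 4; 1]; [:: 0; 2; 4; 1; 3]; [:: 0; 2; 4; 1; 3; 5]; [:: 0; 2; 4; 3]; [:: 0; 2; 4; 3; 1]; [:: 0; 2; 4; 3; 1; 5]; [:: 0; 2; 4; 5; 1]; [:: 0; 2; 4; 5; 3]; [:: 0; 2; 5; 1]; [:: 0; 2; 5; 1; 3]; [:: 0; 2; 5; 1; 4]; [:: 0; 2; 5; 3]; [:: 0; 2; 5; 3; 1]; [:: 0; 2; 5; 3; 4]; [:: 0; 2; 5; 4]; [:: 0; 2; 5; 4; 1]; [:: 0; 2; 5; 4; 3]; [:: 0; 3]; [:: 0; 3; 1; 2; 4]; [:: 0; 3; 1; 2; 5]; [:: 0; 3; 1; 4]; [:: 0; 3; 1; 4; 5]; [:: 0; 3; 1; 4; 5; 2]; [:: 0; 3; 1; 5]; [:: 0; 3; 1; 5; 4]; [:: 0; 3; 1; 5; 4; 2]; [:: 0; 3; 2; 1; 4]; [:: 0; 3; 2; 1;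 5]; [:: 0; 3; 2; 4]; [:: 0; 3; 2; 4; 5]; [:: 0; 3; 2; 4; 5; 1]; [:: 0; 3; 2; 5]; [:: 0; 3; 2; 5; 4]; [:: 0; 3; 2; 5; 4; 1]; [:: 0; 3; 4]; [:: 0; 3; 4; 1; 5]; [:: 0; 3; 4; 1; 5; 2]; [:: 0; 3; 4; 2; 5]; [:: 0; 3; 4; 2; 5; 1]; [:: 0; 3; 4; 5; 1]; [:: 0; 3; 4; 5; 2]; [:: 0; 3; 5; 1]; [:: 0; 3; 5; 1; 2]; [:: 0; 3; 5; 1; 4]; [:: 0; 3; 5; 2]; [:: 0; 3; 5; 2; 1]; [:: 0; 3; 5; 2; 4]; [:: 0; 3; 5; 4]; [:: 0; 3; 5; 4; 1]; [:: 0; 3; 5; 4; 2]; [:: 0; 4; 1; 2; 3; 5]; [:: 0; 4; 1; 2; 5; 3]; [:: 0; 4; 1; 3; 2; 5]; [:: 0; 4; 1; 3; 5; 2]; [:: 0; 4; 1; 5; 2; 3]; [:: 0; 4; 1; 5; 3; 2]; [:: 0; 4; 2; 1; 3; 5]; [:: 0; 4; 2; 1; 5; 3]; [:: 0; 4; 2; 3; 1; 5]; [:: 0; 4; 2; 3; 5; 1]; [:: 0; 4; 2; 5; 1; 3]; [:: 0; 4; 2; 5; 3; 1]; [:: 0; 4; 3; 1; 2; 5]; [:: 0; 4; 3; 1; 5; 2]; [:: 0; 4; 3; 2; 1; 5]; [:: 0; 4; 3; 2; 5; 1]; [:: 0; 4; 3; 5; 1; 2]; [:: 0; 4; 3; 5;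 2; 1]; [:: 0; 4; 5; 1; 2; 3]; [:: 0; 4; 5; 1; 3; 2]; [:: 0; 4; 5; 2; 1; 3]; [:: 0; 4; 5; 2; 3; 1]; [:: 0; 4; 5; 3; 1; 2]; [:: 0; 4; 5; 3; 2; 1]; [:: 0; 5; 1]; [:: 0; 5; 1; 2]; [:: 0; 5; 1; 2; 3]; [:: 0; 5; 1; 2; 4]; [:: 0; 5; 1; 3]; [:: 0; 5; 1; 3; 2]; [:: 0; 5; 1; 3; 4]; [:: 0; 5; 1; 4]; [:: 0; 5; 1; 4; 2]; [:: 0; 5; 1; 4; 3]; [:: 0; 5; 2]; [:: 0; 5; 2; 1]; [:: 0; 5; 2; 1; 3]; [:: 0; 5; 2; 1; 4]; [:: 0; 5; 2; 3]; [:: 0; 5; 2; 3; 1]; [:: 0; 5; 2; 3; 4]; [:: 0; 5; 2; 4]; [:: 0; 5; 2; 4; 1]; [:: 0; 5; 2; 4; 3]; [:: 0; 5; 3]; [:: 0; 5; 3; 1]; [:: 0; 5; 3; 1; 2]; [:: 0; 5; 3; 1; 4]; [:: 0; 5; 3; 2]; [:: 0; 5; 3; 2; 1]; [:: 0; 5; 3; 2; 4]; [:: 0; 5; 3; 4]; [:: 0; 5; 3; 4; 1]; [:: 0; 5; 3; 4; 2]; [:: 0; 5; 4; 1; 2; 3]; [:: 0; 5; 4; 1; 3; 2]; [:: 0; 5; 4; 2; 1; 3]; [:: 0; 5; 4; 2; 3; 1]; [:: 0; 5; 4; 3; 1; 2]; [:: 0; 5; 4; 3; 2; 1]; [:: 1];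 [:: 1; 0; 2; 3; 4]; [:: 1; 0; 2; 3; 5]; [:: 1; 0; 2; 4; 3]; [:: 1; 0; 2; 4; 3; 5]; [:: 1; 0; 2; 5; 3]; [:: 1; 0; 2; 5; 3; 4]; [:: 1; 0; 3; 2; 4]; [:: 1; 0; 3; 2; 5]; [:: 1; 0; 3; 4]; [:: 1; 0; 3; 4; 5]; [:: 1; 0; 3; 4; 5; 2]; [:: 1; 0; 3; 5]; [:: 1; 0; 3; 5; 4]; [:: 1; 0; 3; 5; 4; 2]; [:: 1; 0; 4]; [:: 1; 0; 4; 2; 5]; [:: 1; 0; 4; 2; 5; 3]; [:: 1; 0; 4; 3; 5]; [:: 1; 0; 4; 3; 5; 2]; [:: 1; 0; 4; 5]; [:: 1; 0; 4; 5; 2; 3]; [:: 1; 0; 4; 5; 3; 2]; [:: 1; 0; 5]; [:: 1; 0; 5; 2; 4]; [:: 1; 0; 5; 2; 4; 3]; [:: 1; 0; 5; 3; 4]; [:: 1; 0; 5; 3; 4; 2]; [:: 1; 0; 5; 4]; [:: 1; 0; 5; 4; 2; 3]; [:: 1; 0; 5; 4; 3; 2]; [:: 1; 2; 0; 3; 4]; [:: 1; 2; 0; 3; 5]; [:: 1; 2; 0; 4; 3]; [:: 1; 2; 0; 4; 3; 5]; [:: 1; 2; 0; 5; 3]; [:: 1; 2; 0; 5; 3; 4]; [:: 1; 2; 3; 0; 4]; [:: 1; 2; 3; 0; 5]; [:: 1; 2; 3; 4]; [:: 1; 2; 3; 4; 5]; [:: 1; 2; 3; 4; 5; 0]; [::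 1; 2; 3; 5]; [:: 1; 2; 3; 5; 4]; [:: 1; 2; 3; 5; 4; 0]; [:: 1; 2; 4; 0; 3]; [:: 1; 2; 4; 0; 3; 5]; [:: 1; 2; 4; 3]; [:: 1; 2; 4; 3; 0; 5]; [:: 1; 2; 4; 3; 5; 0]; [:: 1; 2; 4; 5; 3]; [:: 1; 2; 4; 5; 3; 0]; [:: 1; 2; 5; 0; 3]; [:: 1; 2; 5; 0; 3; 4]; [:: 1; 2; 5; 3]; [:: 1; 2; 5; 3; 0; 4]; [:: 1; 2; 5; 3; 4; 0]; [:: 1; 2; 5; 4; 3]; [:: 1; 2; 5; 4; 3; 0]; [:: 1; 3; 0; 2; 4]; [:: 1; 3; 0; 2; 5]; [:: 1; 3; 0; 4]; [:: 1; 3; 0; 4; 5]; [:: 1; 3; 0; 4; 5; 2]; [:: 1; 3; 0; 5]; [:: 1; 3; 0; 5; 4]; [:: 1; 3; 0; 5; 4; 2]; [:: 1; 3; 2; 0; 4]; [:: 1; 3; 2; 0; 5]; [:: 1; 3; 2; 4]; [:: 1; 3; 2; 4; 5]; [:: 1; 3; 2; 4; 5; 0]; [:: 1; 3; 2; 5]; [:: 1; 3; 2; 5; 4]; [:: 1; 3; 2; 5; 4; 0]; [:: 1; 3; 4]; [:: 1; 3; 4; 0; 5]; [:: 1; 3; 4; 0; 5; 2]; [:: 1; 3; 4; 2; 5]; [:: 1; 3; 4; 2; 5; 0]; [:: 1; 3; 4; 5]; [:: 1; 3; 4; 5; 0; 2]; [:: 1; 3; 4; 5; 2; 0]; [:: 1;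 3; 5]; [:: 1; 3; 5; 0; 4]; [:: 1; 3; 5; 0; 4; 2]; [:: 1; 3; 5; 2; 4]; [:: 1; 3; 5; 2; 4; 0]; [:: 1; 3; 5; 4; 0]; [:: 1; 3; 5; 4; 2]; [:: 1; 4]; [:: 1; 4; 0; 2; 5]; [:: 1; 4; 0; 2; 5; 3]; [:: 1; 4; 0; 3; 5]; [:: 1; 4; 0; 3; 5; 2]; [:: 1; 4; 0; 5]; [:: 1; 4; 0; 5; 2; 3]; [:: 1; 4; 0; 5; 3; 2]; [:: 1; 4; 2; 0; 5]; [:: 1; 4; 2; 0; 5; 3]; [:: 1; 4; 2; 3; 5]; [:: 1; 4; 2; 3; 5; 0]; [:: 1; 4; 2; 5]; [:: 1; 4; 2; 5; 0; 3]; [:: 1; 4; 2; 5; 3; 0]; [:: 1; 4; 3; 0; 5]; [:: 1; 4; 3; 0; 5; 2]; [:: 1; 4; 3; 2; 5]; [:: 1; 4; 3; 2; 5; 0]; [:: 1; 4; 3; 5]; [:: 1; 4; 3; 5; 0; 2]; [:: 1; 4; 3; 5; 2; 0]; [:: 1; 4; 5]; [:: 1; 4; 5; 0; 2; 3]; [:: 1; 4; 5; 0; 3; 2]; [:: 1; 4; 5; 2; 0; 3]; [:: 1; 4; 5; 2; 3; 0]; [:: 1; 4; 5; 3; 0; 2]; [:: 1; 4; 5; 3; 2; 0]; [:: 1; 5]; [:: 1; 5; 0; 2; 4]; [:: 1; 5; 0; 2; 4; 3]; [:: 1; 5; 0; 3; 4]; [:: 1; 5; 0; 3; 4; 2]; [::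 1; 5; 0; 4]; [:: 1; 5; 0; 4; 2; 3]; [:: 1; 5; 0; 4; 3; 2]; [:: 1; 5; 2; 0; 4]; [:: 1; 5; 2; 0; 4; 3]; [:: 1; 5; 2; 3; 4]; [:: 1; 5; 2; 3; 4; 0]; [:: 1; 5; 2; 4]; [:: 1; 5; 2; 4; 0; 3]; [:: 1; 5; 2; 4; 3; 0]; [:: 1; 5; 3; 0; 4]; [:: 1; 5; 3; 0; 4; 2]; [:: 1; 5; 3; 2; 4]; [:: 1; 5; 3; 2; 4; 0]; [:: 1; 5; 3; 4; 0]; [:: 1; 5; 3; 4; 2]; [:: 1; 5; 4; 0]; [:: 1; 5; 4; 0; 2]; [:: 1; 5; 4; 0; 2; 3]; [:: 1; 5; 4; 2]; [:: 1; 5; 4; 2; 0]; [:: 1; 5; 4; 2; 0; 3]; [:: 1; 5; 4; 3; 0]; [:: 1; 5; 4; 3; 2]; [:: 2; 0; 1]; [:: 2; 0; 1; 3; 4]; [:: 2; 0; 1; 3; 5]; [:: 2; 0; 1; 4; 3]; [:: 2; 0; 1; 4; 3; 5]; [:: 2; 0; 1; 5; 3]; [:: 2; 0; 1; 5; 3; 4]; [:: 2; 0; 3]; [:: 2; 0; 3; 1]; [:: 2; 0; 3; 1; 4; 5]; [:: 2; 0; 3; 1; 5; 4]; [:: 2; 0; 3; 4; 1]; [:: 2; 0; 3; 4; 1; 5]; [:: 2; 0; 3; 5; 1]; [:: 2; 0; 3; 5; 1; 4]; [:: 2; 0; 4; 1]; [:: 2; 0; 4; 1; 3]; [:: 2;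 0; 4; 1; 3; 5]; [:: 2; 0; 4; 3]; [:: 2; 0; 4; 3; 1]; [:: 2; 0; 4; 3; 1; 5]; [:: 2; 0; 4; 5; 1]; [:: 2; 0; 4; 5; 3]; [:: 2; 0; 5; 1]; [:: 2; 0; 5; 1; 3]; [:: 2; 0; 5; 1; 3; 4]; [:: 2; 0; 5; 3]; [:: 2; 0; 5; 3; 1]; [:: 2; 0; 5; 3; 1; 4]; [:: 2; 0; 5; 4; 1]; [:: 2; 0; 5; 4; 3]; [:: 2; 1]; [:: 2; 1; 0; 3; 4]; [:: 2; 1; 0; 3; 5]; [:: 2; 1; 0; 4; 3]; [:: 2; 1; 0; 4; 3; 5]; [:: 2; 1; 0; 5; 3]; [:: 2; 1; 0; 5; 3; 4]; [:: 2; 1; 3; 0; 4]; [:: 2; 1; 3; 0; 5]; [:: 2; 1; 3; 4]; [:: 2; 1; 3; 4; 5]; [:: 2; 1; 3; 4; 5; 0]; [:: 2; 1; 3; 5]; [:: 2; 1; 3; 5; 4]; [:: 2; 1; 3; 5; 4; 0]; [:: 2; 1; 4; 0; 3]; [:: 2; 1; 4; 0; 3; 5]; [:: 2; 1; 4; 3]; [:: 2; 1; 4; 3; 0; 5]; [:: 2; 1; 4; 3; 5; 0]; [:: 2; 1; 4; 5; 3]; [:: 2; 1; 4; 5; 3; 0]; [:: 2; 1; 5; 0; 3]; [:: 2; 1; 5; 0; 3; 4]; [:: 2; 1; 5; 3]; [:: 2; 1; 5; 3; 0; 4]; [:: 2; 1; 5; 3; 4; 0]; [:: 2; 1; 5;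 4; 3]; [:: 2; 1; 5; 4; 3; 0]; [:: 2; 3]; [:: 2; 3; 0; 1]; [:: 2; 3; 0; 1; 4; 5]; [:: 2; 3; 0; 1; 5; 4]; [:: 2; 3; 0; 4; 1]; [:: 2; 3; 0; 4; 1; 5]; [:: 2; 3; 0; 5; 1]; [:: 2; 3; 0; 5; 1; 4]; [:: 2; 3; 1; 0]; [:: 2; 3; 1; 0; 4]; [:: 2; 3; 1; 0; 5]; [:: 2; 3; 1; 4]; [:: 2; 3; 1; 4; 0]; [:: 2; 3; 1; 4; 5]; [:: 2; 3; 1; 5]; [:: 2; 3; 1; 5; 0]; [:: 2; 3; 1; 5; 4]; [:: 2; 3; 4; 0; 1]; [:: 2; 3; 4; 0; 1; 5]; [:: 2; 3; 4; 1]; [:: 2; 3; 4; 1; 0; 5]; [:: 2; 3; 4; 1; 5; 0]; [:: 2; 3; 4; 5; 1]; [:: 2; 3; 4; 5; 1; 0]; [:: 2; 3; 5; 0; 1]; [:: 2; 3; 5; 0; 1; 4]; [:: 2; 3; 5; 1]; [:: 2; 3; 5; 1; 0; 4]; [:: 2; 3; 5; 1; 4; 0]; [:: 2; 3; 5; 4; 1]; [:: 2; 3; 5; 4; 1; 0]; [:: 2; 4; 0; 1]; [:: 2; 4; 0; 1; 3]; [:: 2; 4; 0; 1; 3; 5]; [:: 2; 4; 0; 3]; [:: 2; 4; 0; 3; 1]; [:: 2; 4; 0; 3; 1; 5]; [:: 2; 4; 0; 5; 1]; [:: 2; 4; 0; 5; 3]; [:: 2; 4; 1; 0]; [:: 2;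 4; 1; 0; 3; 5]; [:: 2; 4; 1; 0; 5; 3]; [:: 2; 4; 1; 3; 0]; [:: 2; 4; 1; 3; 0; 5]; [:: 2; 4; 1; 5; 0]; [:: 2; 4; 1; 5; 0; 3]; [:: 2; 4; 3; 0]; [:: 2; 4; 3; 0; 1; 5]; [:: 2; 4; 3; 0; 5; 1]; [:: 2; 4; 3; 1; 0]; [:: 2; 4; 3; 1; 0; 5]; [:: 2; 4; 3; 5; 0]; [:: 2; 4; 3; 5; 0; 1]; [:: 2; 4; 5; 0; 1]; [:: 2; 4; 5; 0; 3]; [:: 2; 4; 5; 1; 0]; [:: 2; 4; 5; 1; 0; 3]; [:: 2; 4; 5; 3; 0]; [:: 2; 4; 5; 3; 0; 1]; [:: 2; 5; 0; 1]; [:: 2; 5; 0; 1; 3]; [:: 2; 5; 0; 1; 3; 4]; [:: 2; 5; 0; 3]; [:: 2; 5; 0; 3; 1]; [:: 2; 5; 0; 3; 1; 4]; [:: 2; 5; 0; 4; 1]; [:: 2; 5; 0; 4; 3]; [:: 2; 5; 1]; [:: 2; 5; 1; 0; 3]; [:: 2; 5; 1; 0; 3; 4]; [:: 2; 5; 1; 3]; [:: 2; 5; 1; 3; 0; 4]; [:: 2; 5; 1; 3; 4; 0]; [:: 2; 5; 1; 4; 3]; [:: 2; 5; 1; 4; 3; 0]; [:: 2; 5; 3]; [:: 2; 5; 3; 0; 1]; [:: 2; 5; 3; 0; 1; 4]; [:: 2; 5; 3; 1]; [:: 2; 5; 3; 1; 0; 4]; [:: 2; 5; 3; 1; 4; 0];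 [:: 2; 5; 3; 4; 1]; [:: 2; 5; 3; 4; 1; 0]; [:: 2; 5; 4; 0; 1]; [:: 2; 5; 4; 0; 3]; [:: 2; 5; 4; 1; 0]; [:: 2; 5; 4; 1; 0; 3]; [:: 2; 5; 4; 3; 0]; [:: 2; 5; 4; 3; 0; 1]; [:: 3]; [:: 3; 0]; [:: 3; 0; 1; 2; 4]; [:: 3; 0; 1; 2; 5]; [:: 3; 0; 1; 4]; [:: 3; 0; 1; 4; 5]; [:: 3; 0; 1; 4; 5; 2]; [:: 3; 0; 1; 5]; [:: 3; 0; 1; 5; 4]; [:: 3; 0; 1; 5; 4; 2]; [:: 3; 0; 2; 1; 4]; [:: 3; 0; 2; 1; 5]; [:: 3; 0; 2; 4]; [:: 3; 0; 2; 4; 5]; [:: 3; 0; 2; 4; 5; 1]; [:: 3; 0; 2; 5]; [:: 3; 0; 2; 5; 4]; [:: 3; 0; 2; 5; 4; 1]; [:: 3; 0; 4]; [:: 3; 0; 4; 1; 5]; [:: 3; 0; 4; 1; 5; 2]; [:: 3; 0; 4; 2; 5]; [:: 3; 0; 4; 2; 5; 1]; [:: 3; 0; 4; 5; 1]; [:: 3; 0; 4; 5; 2]; [:: 3; 0; 5; 1]; [:: 3; 0; 5; 1; 2]; [:: 3; 0; 5; 1; 4]; [:: 3; 0; 5; 2]; [:: 3; 0; 5; 2; 1]; [:: 3; 0; 5; 2; 4]; [:: 3; 0; 5; 4]; [:: 3; 0; 5; 4; 1]; [:: 3; 0; 5; 4; 2]; [:: 3; 1; 0]; [:: 3; 1;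 0; 2; 4]; [:: 3; 1; 0; 2; 5]; [:: 3; 1; 0; 4]; [:: 3; 1; 0; 4; 5]; [:: 3; 1; 0; 4; 5; 2]; [:: 3; 1; 0; 5]; [:: 3; 1; 0; 5; 4]; [:: 3; 1; 0; 5; 4; 2]; [:: 3; 1; 2; 0]; [:: 3; 1; 2; 0; 4]; [:: 3; 1; 2; 0; 5]; [:: 3; 1; 2; 4]; [:: 3; 1; 2; 4; 0]; [:: 3; 1; 2; 4; 5]; [:: 3; 1; 2; 5]; [:: 3; 1; 2; 5; 0]; [:: 3; 1; 2; 5; 4]; [:: 3; 1; 4; 0; 2]; [:: 3; 1; 4; 0; 5]; [:: 3; 1; 4; 2]; [:: 3; 1; 4; 2; 5]; [:: 3; 1; 4; 2; 5; 0]; [:: 3; 1; 4; 5]; [:: 3; 1; 4; 5; 2]; [:: 3; 1; 4; 5; 2; 0]; [:: 3; 1; 5]; [:: 3; 1; 5; 0]; [:: 3; 1; 5; 0; 4]; [:: 3; 1; 5; 0; 4; 2]; [:: 3; 1; 5; 2; 0]; [:: 3; 1; 5; 2; 4]; [:: 3; 1; 5; 4; 2]; [:: 3; 1; 5; 4; 2; 0]; [:: 3; 2; 0; 1]; [:: 3; 2; 0; 1; 4; 5]; [:: 3; 2; 0; 1; 5; 4]; [:: 3; 2; 0; 4; 1]; [:: 3; 2; 0; 4; 1; 5]; [:: 3; 2; 0; 5; 1]; [:: 3; 2; 0; 5; 1; 4]; [:: 3; 2; 1; 0]; [:: 3; 2; 1; 0; 4]; [:: 3; 2; 1; 0; 5];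 [:: 3; 2; 1; 4]; [:: 3; 2; 1; 4; 0]; [:: 3; 2; 1; 4; 5]; [:: 3; 2; 1; 5]; [:: 3; 2; 1; 5; 0]; [:: 3; 2; 1; 5; 4]; [:: 3; 2; 4; 0; 1]; [:: 3; 2; 4; 0; 1; 5]; [:: 3; 2; 4; 1]; [:: 3; 2; 4; 1; 0; 5]; [:: 3; 2; 4; 1; 5; 0]; [:: 3; 2; 4; 5; 1]; [:: 3; 2; 4; 5; 1; 0]; [:: 3; 2; 5; 0; 1]; [:: 3; 2; 5; 0; 1; 4]; [:: 3; 2; 5; 1]; [:: 3; 2; 5; 1; 0; 4]; [:: 3; 2; 5; 1; 4; 0]; [:: 3; 2; 5; 4; 1]; [:: 3; 2; 5; 4; 1; 0]; [:: 3; 4; 0; 1; 2]; [:: 3; 4; 0; 1; 5]; [:: 3; 4; 0; 2; 1]; [:: 3; 4; 0; 2; 1; 5]; [:: 3; 4; 0; 5]; [:: 3; 4; 0; 5; 2]; [:: 3; 4; 0; 5; 2; 1]; [:: 3; 4; 1; 0; 2]; [:: 3; 4; 1; 0; 5]; [:: 3; 4; 1; 2]; [:: 3; 4; 1; 2; 5]; [:: 3; 4; 1; 2; 5; 0]; [:: 3; 4; 1; 5]; [:: 3; 4; 1; 5; 2]; [:: 3; 4; 1; 5; 2; 0]; [:: 3; 4; 2; 0; 1]; [:: 3; 4; 2; 0; 1; 5]; [:: 3; 4; 2; 1]; [:: 3; 4; 2; 1; 0; 5]; [:: 3; 4; 2; 1; 5; 0]; [:: 3; 4; 2; 5; 1];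 [:: 3; 4; 2; 5; 1; 0]; [:: 3; 4; 5]; [:: 3; 4; 5; 0; 2]; [:: 3; 4; 5; 0; 2; 1]; [:: 3; 4; 5; 1; 2]; [:: 3; 4; 5; 1; 2; 0]; [:: 3; 4; 5; 2]; [:: 3; 4; 5; 2; 0; 1]; [:: 3; 4; 5; 2; 1; 0]; [:: 3; 5]; [:: 3; 5; 0]; [:: 3; 5; 0; 1; 4]; [:: 3; 5; 0; 1; 4; 2]; [:: 3; 5; 0; 2; 4]; [:: 3; 5; 0; 2; 4; 1]; [:: 3; 5; 0; 4]; [:: 3; 5; 0; 4; 1; 2]; [:: 3; 5; 0; 4; 2; 1]; [:: 3; 5; 1; 0]; [:: 3; 5; 1; 0; 4]; [:: 3; 5; 1; 0; 4; 2]; [:: 3; 5; 1; 2; 0]; [:: 3; 5; 1; 2; 4]; [:: 3; 5; 1; 4; 2]; [:: 3; 5; 1; 4; 2; 0]; [:: 3; 5; 2; 0]; [:: 3; 5; 2; 0; 4]; [:: 3; 5; 2; 0; 4; 1]; [:: 3; 5; 2; 1; 0]; [:: 3; 5; 2; 1; 4]; [:: 3; 5; 2; 4]; [:: 3; 5; 2; 4; 0]; [:: 3; 5; 2; 4; 0; 1]; [:: 3; 5; 4; 0; 2]; [:: 3; 5; 4; 0; 2; 1]; [:: 3; 5; 4; 1; 2]; [:: 3; 5; 4; 1; 2; 0]; [:: 3; 5; 4; 2]; [:: 3; 5; 4; 2; 0; 1]; [:: 3; 5; 4; 2; 1; 0]; [:: 4; 0; 1; 2]; [:: 4; 0; 1;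 2; 3]; [:: 4; 0; 1; 2; 5]; [:: 4; 0; 1; 3]; [:: 4; 0; 1; 3; 2]; [:: 4; 0; 1; 3; 5]; [:: 4; 0; 1; 5]; [:: 4; 0; 1; 5; 2]; [:: 4; 0; 1; 5; 3]; [:: 4; 0; 2; 1]; [:: 4; 0; 2; 1; 3]; [:: 4; 0; 2; 1; 3; 5]; [:: 4; 0; 2; 3]; [:: 4; 0; 2; 3; 1]; [:: 4; 0; 2; 3; 1; 5]; [:: 4; 0; 2; 5; 1]; [:: 4; 0; 2; 5; 3]; [:: 4; 0; 3]; [:: 4; 0; 3; 1; 2]; [:: 4; 0; 3; 1; 5]; [:: 4; 0; 3; 2; 1]; [:: 4; 0; 3; 2; 1; 5]; [:: 4; 0; 3; 5]; [:: 4; 0; 3; 5; 2]; [:: 4; 0; 3; 5; 2; 1]; [:: 4; 0; 5]; [:: 4; 0; 5; 1; 2]; [:: 4; 0; 5; 1; 3]; [:: 4; 0; 5; 2]; [:: 4; 0; 5; 2; 3]; [:: 4; 0; 5; 2; 3; 1]; [:: 4; 0; 5; 3]; [:: 4; 0; 5; 3; 2]; [:: 4; 0; 5; 3; 2; 1]; [:: 4; 1; 0; 2]; [:: 4; 1; 0; 2; 3]; [:: 4; 1; 0; 2; 5]; [:: 4; 1; 0; 3]; [:: 4; 1; 0; 3; 2]; [:: 4; 1; 0; 3; 5]; [:: 4; 1; 0; 5]; [:: 4; 1; 0; 5; 2]; [:: 4; 1; 0; 5; 3]; [:: 4; 1; 2; 0]; [:: 4; 1; 2; 0; 3; 5]; [::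 4; 1; 2; 0; 5; 3]; [:: 4; 1; 2; 3; 0]; [:: 4; 1; 2; 3; 0; 5]; [:: 4; 1; 2; 5; 0]; [:: 4; 1; 2; 5; 0; 3]; [:: 4; 1; 3; 0]; [:: 4; 1; 3; 0; 2; 5]; [:: 4; 1; 3; 0; 5; 2]; [:: 4; 1; 3; 2; 0]; [:: 4; 1; 3; 2; 0; 5]; [:: 4; 1; 3; 5; 0]; [:: 4; 1; 3; 5; 0; 2]; [:: 4; 1; 5; 0]; [:: 4; 1; 5; 0; 2; 3]; [:: 4; 1; 5; 0; 3; 2]; [:: 4; 1; 5; 2; 0]; [:: 4; 1; 5; 2; 0; 3]; [:: 4; 1; 5; 3; 0]; [:: 4; 1; 5; 3; 0; 2]; [:: 4; 2; 0; 1]; [:: 4; 2; 0; 1; 3]; [:: 4; 2; 0; 1; 3; 5]; [:: 4; 2; 0; 3]; [:: 4; 2; 0; 3; 1]; [:: 4; 2; 0; 3; 1; 5]; [:: 4; 2; 0; 5; 1]; [:: 4; 2; 0; 5; 3]; [:: 4; 2; 1; 0]; [:: 4; 2; 1; 0; 3; 5]; [:: 4; 2; 1; 0; 5; 3]; [:: 4; 2; 1; 3; 0]; [:: 4; 2; 1; 3; 0; 5]; [:: 4; 2; 1; 5; 0]; [:: 4; 2; 1; 5; 0; 3]; [:: 4; 2; 3; 0]; [:: 4; 2; 3; 0; 1; 5]; [:: 4; 2; 3; 0; 5; 1]; [:: 4; 2; 3; 1; 0]; [:: 4; 2; 3; 1; 0; 5]; [:: 4; 2; 3; 5; 0]; [::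 4; 2; 3; 5; 0; 1]; [:: 4; 2; 5; 0; 1]; [:: 4; 2; 5; 0; 3]; [:: 4; 2; 5; 1; 0]; [:: 4; 2; 5; 1; 0; 3]; [:: 4; 2; 5; 3; 0]; [:: 4; 2; 5; 3; 0; 1]; [:: 4; 3; 0]; [:: 4; 3; 0; 1; 2; 5]; [:: 4; 3; 0; 1; 5; 2]; [:: 4; 3; 0; 2; 1; 5]; [:: 4; 3; 0; 2; 5; 1]; [:: 4; 3; 0; 5; 1; 2]; [:: 4; 3; 0; 5; 2; 1]; [:: 4; 3; 1; 0]; [:: 4; 3; 1; 0; 2; 5]; [:: 4; 3; 1; 0; 5; 2]; [:: 4; 3; 1; 2; 0]; [:: 4; 3; 1; 2; 0; 5]; [:: 4; 3; 1; 5; 0]; [:: 4; 3; 1; 5; 0; 2]; [:: 4; 3; 2; 0]; [:: 4; 3; 2; 0; 1; 5]; [:: 4; 3; 2; 0; 5; 1]; [:: 4; 3; 2; 1; 0]; [:: 4; 3; 2; 1; 0; 5]; [:: 4; 3; 2; 5; 0]; [:: 4; 3; 2; 5; 0; 1]; [:: 4; 3; 5; 0]; [:: 4; 3; 5; 0; 1; 2]; [:: 4; 3; 5; 0; 2; 1]; [:: 4; 3; 5; 1; 0]; [:: 4; 3; 5; 1; 0; 2]; [:: 4; 3; 5; 2; 0]; [:: 4; 3; 5; 2; 0; 1]; [:: 4; 5; 0]; [:: 4; 5; 0; 1; 2; 3]; [:: 4; 5; 0; 1; 3; 2]; [:: 4; 5; 0; 2; 1; 3]; [:: 4; 5; 0;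 2; 3; 1]; [:: 4; 5; 0; 3; 1; 2]; [:: 4; 5; 0; 3; 2; 1]; [:: 4; 5; 1; 0]; [:: 4; 5; 1; 0; 2; 3]; [:: 4; 5; 1; 0; 3; 2]; [:: 4; 5; 1; 2; 0]; [:: 4; 5; 1; 2; 0; 3]; [:: 4; 5; 1; 3; 0]; [:: 4; 5; 1; 3; 0; 2]; [:: 4; 5; 2; 0; 1]; [:: 4; 5; 2; 0; 3]; [:: 4; 5; 2; 1; 0]; [:: 4; 5; 2; 1; 0; 3]; [:: 4; 5; 2; 3; 0]; [:: 4; 5; 2; 3; 0; 1]; [:: 4; 5; 3; 0]; [:: 4; 5; 3; 0; 1; 2]; [:: 4; 5; 3; 0; 2; 1]; [:: 4; 5; 3; 1; 0]; [:: 4; 5; 3; 1; 0; 2]; [:: 4; 5; 3; 2; 0]; [:: 4; 5; 3; 2; 0; 1]; [:: 5]; [:: 5; 0]; [:: 5; 0; 1]; [:: 5; 0; 1; 2]; [:: 5; 0; 1; 2; 3; 4]; [:: 5; 0; 1; 2; 4; 3]; [:: 5; 0; 1; 3; 2]; [:: 5; 0; 1; 3; 2; 4]; [:: 5; 0; 1; 4; 2]; [:: 5; 0; 1; 4; 2; 3]; [:: 5; 0; 2]; [:: 5; 0; 2; 1]; [:: 5; 0; 2; 1; 3; 4]; [:: 5; 0; 2; 1; 4; 3]; [:: 5; 0; 2; 3; 1]; [:: 5; 0; 2; 3; 1; 4]; [:: 5; 0; 2; 4; 1]; [:: 5; 0; 2; 4; 1; 3]; [:: 5; 0; 3; 1];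 [:: 5; 0; 3; 1; 2]; [:: 5; 0; 3; 1; 2; 4]; [:: 5; 0; 3; 2]; [:: 5; 0; 3; 2; 1]; [:: 5; 0; 3; 2; 1; 4]; [:: 5; 0; 3; 4; 1]; [:: 5; 0; 3; 4; 2]; [:: 5; 0; 4; 1]; [:: 5; 0; 4; 1; 2]; [:: 5; 0; 4; 1; 2; 3]; [:: 5; 0; 4; 2]; [:: 5; 0; 4; 2; 1]; [:: 5; 0; 4; 2; 1; 3]; [:: 5; 0; 4; 3; 1]; [:: 5; 0; 4; 3; 2]; [:: 5; 1]; [:: 5; 1; 0; 2; 4]; [:: 5; 1; 0; 2; 4; 3]; [:: 5; 1; 0; 3; 4]; [:: 5; 1; 0; 3; 4; 2]; [:: 5; 1; 0; 4]; [:: 5; 1; 0; 4; 2; 3]; [:: 5; 1; 0; 4; 3; 2]; [:: 5; 1; 2; 0; 4]; [:: 5; 1; 2; 0; 4; 3]; [:: 5; 1; 2; 3; 4]; [:: 5; 1; 2; 3; 4; 0]; [:: 5; 1; 2; 4]; [:: 5; 1; 2; 4; 0; 3]; [:: 5; 1; 2; 4; 3; 0]; [:: 5; 1; 3; 0; 4]; [:: 5; 1; 3; 0; 4; 2]; [:: 5; 1; 3; 2; 4]; [:: 5; 1; 3; 2; 4; 0]; [:: 5; 1; 3; 4; 0]; [:: 5; 1; 3; 4; 2]; [:: 5; 1; 4; 0]; [:: 5; 1; 4; 0; 2]; [:: 5; 1; 4; 0; 2; 3]; [:: 5; 1; 4; 2]; [:: 5; 1; 4; 2; 0]; [:: 5;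 1; 4; 2; 0; 3]; [:: 5; 1; 4; 3; 0]; [:: 5; 1; 4; 3; 2]; [:: 5; 2]; [:: 5; 2; 0]; [:: 5; 2; 0; 1]; [:: 5; 2; 0; 1; 3; 4]; [:: 5; 2; 0; 1; 4; 3]; [:: 5; 2; 0; 3; 1]; [:: 5; 2; 0; 3; 1; 4]; [:: 5; 2; 0; 4; 1]; [:: 5; 2; 0; 4; 1; 3]; [:: 5; 2; 1]; [:: 5; 2; 1; 0]; [:: 5; 2; 1; 0; 3; 4]; [:: 5; 2; 1; 0; 4; 3]; [:: 5; 2; 1; 3; 0]; [:: 5; 2; 1; 3; 0; 4]; [:: 5; 2; 1; 4; 0]; [:: 5; 2; 1; 4; 0; 3]; [:: 5; 2; 3; 0]; [:: 5; 2; 3; 0; 1]; [:: 5; 2; 3; 0; 1; 4]; [:: 5; 2; 3; 1]; [:: 5; 2; 3; 1; 0]; [:: 5; 2; 3; 1; 0; 4]; [:: 5; 2; 3; 4; 0]; [:: 5; 2; 3; 4; 1]; [:: 5; 2; 4; 0; 3]; [:: 5; 2; 4; 0; 3; 1]; [:: 5; 2; 4; 1; 3]; [:: 5; 2; 4; 1; 3; 0]; [:: 5; 2; 4; 3; 0]; [:: 5; 2; 4; 3; 1]; [:: 5; 3; 0]; [:: 5; 3; 0; 1]; [:: 5; 3; 0; 1; 2]; [:: 5; 3; 0; 1; 2; 4]; [:: 5; 3; 0; 2]; [:: 5; 3; 0; 2; 1]; [:: 5; 3; 0; 2; 1; 4]; [:: 5; 3; 0; 4; 1]; [:: 5; 3;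 0; 4; 2]; [:: 5; 3; 1]; [:: 5; 3; 1; 0; 4]; [:: 5; 3; 1; 0; 4; 2]; [:: 5; 3; 1; 2; 4]; [:: 5; 3; 1; 2; 4; 0]; [:: 5; 3; 1; 4; 0]; [:: 5; 3; 1; 4; 2]; [:: 5; 3; 2]; [:: 5; 3; 2; 0]; [:: 5; 3; 2; 0; 1]; [:: 5; 3; 2; 0; 1; 4]; [:: 5; 3; 2; 1]; [:: 5; 3; 2; 1; 0]; [:: 5; 3; 2; 1; 0; 4]; [:: 5; 3; 2; 4; 0]; [:: 5; 3; 2; 4; 1]; [:: 5; 3; 4; 0]; [:: 5; 3; 4; 0; 1]; [:: 5; 3; 4; 0; 2]; [:: 5; 3; 4; 1]; [:: 5; 3; 4; 1; 0]; [:: 5; 3; 4; 1; 2]; [:: 5; 3; 4; 2]; [:: 5; 3; 4; 2; 0]; [:: 5; 3; 4; 2; 1]; [:: 5; 4; 0; 1; 2]; [:: 5; 4; 0; 1; 3]; [:: 5; 4; 0; 2]; [:: 5; 4; 0; 2; 3]; [:: 5; 4; 0; 2; 3; 1]; [:: 5; 4; 0; 3]; [:: 5; 4; 0; 3; 2]; [:: 5; 4; 0; 3; 2; 1]; [:: 5; 4; 1; 0; 2]; [:: 5; 4; 1; 0; 3]; [:: 5; 4; 1; 2]; [:: 5; 4; 1; 2; 3]; [:: 5; 4; 1; 2; 3; 0]; [:: 5; 4; 1; 3]; [:: 5; 4; 1; 3; 2]; [:: 5; 4; 1; 3; 2; 0]; [:: 5; 4; 2]; [:: 5; 4; 2; 0;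 3]; [:: 5; 4; 2; 0; 3; 1]; [:: 5; 4; 2; 1; 3]; [:: 5; 4; 2; 1; 3; 0]; [:: 5; 4; 2; 3; 0]; [:: 5; 4; 2; 3; 1]; [:: 5; 4; 3; 0]; [:: 5; 4; 3; 0; 1]; [:: 5; 4; 3; 0; 2]; [:: 5; 4; 3; 1]; [:: 5; 4; 3; 1; 0]; [:: 5; 4; 3; 1; 2]; [:: 5; 4; 3; 2]; [:: 5; 4; 3; 2; 0]; [:: 5; 4; 3; 2; 1]].
Definition T6_table : seq (seq nat) := [:: [:: 0]; [:: 0; 1; 2; 3; 5]; [:: 3]; [:: 1]; [:: 4]; [:: 2]; [:: ]; [:: ]; [:: 1]; [:: 3]; [:: 0; 1; 3; 4; 5]; [:: 0]; [:: 5]; [:: ]; [:: ]; [:: 4]; [:: ]; [:: ]; [:: 5]; [:: ]; [:: 0; 1; 3; 4; 5]; [:: 0]; [:: 1]; [:: 3]; [:: ]; [:: 5]; [:: 4]; [:: 2]; [:: 3]; [:: 1]; [:: ]; [:: 1; 2; 3; 4; 5]; [:: ]; [:: 5]; [:: 4]; [:: 2]; [:: 3]; [:: 1]; [:: 0]; [:: 0; 1; 2; 3; 4]; [:: 2]; [:: 4]; [:: 5]; [:: ]; [:: 0; 1; 2; 3; 5]; [:: 0]; [:: 1]; [:: 3]; [:: ]; [:: ]; [:: 0; 2; 3; 4; 5]; [:: 0]; [:: 5]; [:: ]; [:: 2]; [:: 4]; [:: 0]; [:: 0; 1; 2; 4; 5]; [:: 3]; [:: 1]; [:: ]; [:: 2];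 [:: ]; [:: 5]].

Theorem mainTheorem6 :
  exists (S : seq 'I_6 -> bool) (T : {ffun 'I_6 -> bool} -> {set 'I_6}),
    kkn_strategy 5 1 S T.
Proof.
exists (table_S S6_ones), (table_T T6_table).
by apply: table_kkn_strategy; vm_compute.
Qed.
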